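(* Let $V$ be an infinite-dimensional vector space over a field $\mathbb{F}$. Let $a,b,c$ be quadratic endomorphisms of $V$, and let $\lambda\in\mathbb{F}$ and $w\in\mathrm{End}(V)$ be such that $\lambda\,\mathrm{id}_V+w=a+b+c$ and $\operatorname{rk}w<\dim V$. Let $W$ be a linear subspace of $V$ with $\operatorname{im}w\subset W$ and $\dim W<\dim V$. Then there exists a linear subspace $\overline{W}$ of $V$ with $W\subset\overline{W}$, $\dim\overline{W}<\dim V$, and $\overline{W}$ stable under $a$, $b$ and $c$. Moreover, if $W$ is finite-dimensional then $\overline{W}$ can be chosen finite-dimensional.
   Context: An endomorphism $e$ of $V$ is quadratic if $p(e)=0$ for some polynomial $p\in\mathbb{F}[t]$ of degree $2$. *)

From HB Require Import structures.
From mathcomp Require Import all_boot all_order all_algebra.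
From mathcomp Require Import boolp classical_sets cardinality.
Set Implicit Arguments. Unset Strict Implicit. Unset Printing Implicit Defensive.
Import GRing.Theory.
Local Open Scope ring_scope.
Local Open Scope classical_set_scope.

Definition subspace (F : fieldType) (V : lmodType F) (U : set V) : Prop :=
  U 0 /\ (forall x y, U x -> U y -> U (x + y)) /\
  (forall (k : F) x, U x -> U (k *: x)).

Definition lin_indep (F : fieldType) (V : lmodType F) (B : set V) : Prop :=
  forall (s : seq V) (c : V -> F), uniq s -> (forall v, v \in s -> B v) ->
    \sum_(v <- s) c v *: v = 0 -> forall v, v \in s -> c v = 0.

Definition spans (F : fieldType) (V : lmodType F) (B U : set V) : Prop :=
  forall x, U x -> exists (s : seq V) (c : V -> F),
    (forall v, v \in s -> B v) /\ x = \sum_(v <- s) c v *: v.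

Definition is_basis (F : fieldType) (V : lmodType F) (U B : set V) : Prop :=
  B `<=` U /\ lin_indep B /\ spans B U.

(* dim U < dim U' (cardinal dimensions, via bases; well-defined since all
   bases of a space have the same cardinality). *)
Definition dim_lt (F : fieldType) (V : lmodType F) (U U' : set V) : Prop :=
  exists B B', is_basis U B /\ is_basis U' B' /\ ~ card_le B' B.

Definition finite_dim (F : fieldType) (V : lmodType F) (U : set V) : Prop :=
  exists B, is_basis U B /\ finite_set B.

Definition infinite_dim (F : fieldType) (V : lmodType F) (U : set V) : Prop :=
  exists B, is_basis U B /\ infinite_set B.

Definition poly_end (F : fieldType) (V : lmodType F) (p : {poly F})
  (e : {linear V -> V}) (v : V) : V :=
  \sum_(i < size p) p`_i *: iter i e v.

Definition quadratic (F : fieldType) (V : lmodType F) (e : {linear V -> V}) : Prop :=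
  exists p : {poly F}, size p = 3%N /\ forall v, poly_end p e v = 0.

Definition stable (F : fieldType) (V : lmodType F) (e : {linear V -> V}) (U : set V) : Prop :=
  e @` U `<=` U.

(* Take U = W + aW + bW + abW.  As c = lambda + w - a - b and w maps into W,
   stability under c follows from stability under a and b, and by the
   quadratic relations a^2, b^2 in span(1, a), span(1, b) the only
   non-obvious inclusion is b(aW) in U.  For x with x, ax, bx, abx in U, the
   vector y = c x lies in U, hence so do c y = c^2 x, a y and b y; then
   b a x = lambda b x + b w x - b^2 x - b y.
   A basis of U can be extracted from the images of a basis B of W under
   1, a, b, ab, so dim U <= 4 |B|: finite when B is, and at most |B| when B
   is infinite, because kappa + kappa = kappa for an infinite cardinal (Zorn). *)

From HB Require Import structures.
From mathcomp Require Import all_boot all_order all_algebra.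
From mathcomp Require Import boolp classical_sets cardinality.
From mathcomp Require Import zify.
Set Implicit Arguments.
Unset Strict Implicit.
Unset Printing Implicit Defensive.
Import GRing.Theory.
Local Open Scope ring_scope.
Local Open Scope classical_set_scope.
Local Open Scope card_scope.

Lemma infinite_set_injseq (T : Type) (A : set T) : infinite_set A ->
  exists e : nat -> T, (forall n, A (e n)) /\ injective e.
Proof.
move=> /infiniteP /pcard_surjP [g gA].
have /choice [e eA] : forall n : nat, exists x, A x /\ g x = n.
  by move=> n; have [x Ax gx] := gA n I; exists x.
exists e; split=> [n|n m enm]; first by case: (eA n).
by rewrite -(eA n).2 -(eA m).2 enm.
Qed.

Lemma countableU (T : Type) (A B : set T) :
  countable A -> countable B -> countable (A `|` B).
Proof.
by move=> cA cB; rewrite -bigcup2E; apply: bigcup_countable => [|[|[|i]]].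
Qed.

Lemma inj_into_infinite_subset (T : choiceType) (A X : set T) :
  infinite_set X -> countable (A `\` X) ->
  exists h : T -> T, {in A &, injective h} /\ h @` A `<=` X.
Proof.
move=> /infinite_set_injseq [e [eX einj]] cAX.
pose C := A `\` X `|` range e.
have /pcard_injP [j jinj] : countable C by apply: countableU => //; exact: card_image_le.
pose h x := if `[< C x >] then e (j x) else x.
exists h; split => [x y Ax Ay|_ [x Ax <-]].
  rewrite /h; case: (asboolP (C x)) => Cx; case: (asboolP (C y)) => Cy.
  - by move/einj/jinj; apply; rewrite inE.
  - by move=> yE; case: Cy; right; exists (j x).
  - by move=> xE; case: Cx; right; exists (j y).
  - by [].
rewrite /h; case: asboolP => // nCx.
by apply: contrapT => nXx; apply: nCx; left.
Qed.

Section Doubling.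
Variables (T : choiceType) (A : set T).
Implicit Types (G N : set (T * bool * T)).

Definition graph_dom G : set T := [set x | exists b y, G (x, b, y)].

(* A bijection [graph_dom G * bool -> graph_dom G] inside [A], given by its graph
   so that the union of a chain of such bijections is again one. *)
Definition doubling G : Prop :=
  [/\ graph_dom G `<=` A,
      (forall x b y, G (x, b, y) -> graph_dom G y),
      (forall x b, graph_dom G x -> exists y, G (x, b, y)),
      (forall p y y', G (p, y) -> G (p, y') -> y = y') &
      (forall p p' y, G (p, y) -> G (p', y) -> p = p')].

Lemma doubling_bigcup (FF : set (set (T * bool * T))) :
  FF `<=` doubling -> total_on FF subset -> doubling (\bigcup_(G in FF) G).
Proof.
move=> FFd FFtot.
have dom_sub G : FF G -> graph_dom G `<=` graph_dom (\bigcup_(G in FF) G).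
  by move=> FFG x [b [y Gy]]; exists b, y, G.
split.
- by move=> x [b [y [G /FFd [+ _ _ _ _] Gy]]]; apply; exists b, y.
- move=> x b y [G FFG Gy]; apply: (dom_sub _ FFG).
  by have [_ + _ _ _] := FFd _ FFG; apply; exact: Gy.
- move=> x b [b' [y' [G FFG Gy']]].
  have [_ _ + _ _] := FFd _ FFG; case/(_ x b)=> [|y Gy]; first by exists b', y'.
  by exists y, G.
- move=> p y y' [G FFG Gy] [G' FFG' Gy'].
  have [GG'|G'G] := FFtot _ _ FFG FFG'.
  + by have [_ _ _ Gf _] := FFd _ FFG'; apply: Gf (GG' _ Gy) Gy'.
  + by have [_ _ _ Gf _] := FFd _ FFG; apply: Gf Gy (G'G _ Gy').
- move=> p p' y [G FFG Gy] [G' FFG' Gy'].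
  have [GG'|G'G] := FFtot _ _ FFG FFG'.
  + by have [_ _ _ _ Gi] := FFd _ FFG'; apply: Gi (GG' _ Gy) Gy'.
  + by have [_ _ _ _ Gi] := FFd _ FFG; apply: Gi Gy (G'G _ Gy').
Qed.

Lemma graph_domU G N : graph_dom (G `|` N) = graph_dom G `|` graph_dom N.
Proof.
apply/seteqP; split=> [x [b [y [Gy|Ny]]]|x [[b [y Gy]]|[b [y Ny]]]].
- by left; exists b, y.
- by right; exists b, y.
- by exists b, y; left.
- by exists b, y; right.
Qed.

Lemma doublingU G N : doubling G -> doubling N ->
  graph_dom G `&` graph_dom N = set0 -> doubling (G `|` N).
Proof.
move=> [GA Gim Gtot Gfun Ginj] [NA Nim Ntot Nfun Ninj] GN0.
have disj x : graph_dom G x -> graph_dom N x -> False.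
  by move=> Gx Nx; have : (graph_dom G `&` graph_dom N) x by []; rewrite GN0.
split; rewrite ?graph_domU.
- by rewrite subUset.
- by move=> x b y [/Gim|/Nim]; [left|right].
- move=> x b [/(Gtot _ b) [y Gy]|/(Ntot _ b) [y Ny]]; exists y; [left|right] => //.
- move=> [x b] y y' [Gy|Ny] [Gy'|Ny']; [exact: Gfun Gy Gy'| | |exact: Nfun Ny Ny'].
  + by case: (disj x); [exists b, y | exists b, y'].
  + by case: (disj x); [exists b, y' | exists b, y].
- move=> [x b] [x' b'] y [Gy|Ny] [Gy'|Ny'];
    [exact: Ginj Gy Gy'| | |exact: Ninj Ny Ny'].
  + by case: (disj y); [apply: Gim Gy | apply: Nim Ny'].
  + by case: (disj y); [apply: Gim Gy' | apply: Nim Ny].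
Qed.

Definition seq_graph (e : nat -> T) : set (T * bool * T) :=
  [set p | exists n (b : bool), p = (e n, b, e (n.*2 + b)%N)].

Lemma graph_dom_seq e : graph_dom (seq_graph e) `<=` range e.
Proof. by move=> _ [b [y [n [b' [-> _ _]]]]]; exists n. Qed.

Lemma doubling_seq e : injective e -> (forall n, A (e n)) -> doubling (seq_graph e).
Proof.
move=> einj eA; have dom_e n : graph_dom (seq_graph e) (e n).
  by exists false, (e n.*2); exists n, false; rewrite addn0.
have double_inj n m (b b' : bool) : (n.*2 + b = m.*2 + b')%N -> n = m /\ b = b'.
  by case: b; case: b' => /=; rewrite -!muln2; lia.
split.
- by move=> _ /graph_dom_seq [n _ <-].
- by move=> x b _ [n [b' [_ _ ->]]]; apply: dom_e.
- by move=> _ b /graph_dom_seq [n _ <-]; exists (e (n.*2 + b)%N), n, b.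
- by move=> p y y' [n [b [-> ->]]] [n' [b' [/einj <- <- ->]]].
- by move=> p p' y [n [b [-> ->]]] [n' [b' [-> /einj /double_inj [<- <-]]]].
Qed.

Lemma doubling_maximal_cofinite G : doubling G ->
  (forall G', G `<` G' -> ~ doubling G') -> finite_set (A `\` graph_dom G).
Proof.
move=> Gd Gmax; apply: contrapT => /infinite_set_injseq [e [eAG einj]].
have eG n : ~ graph_dom G (e n) by case: (eAG n).
apply: (Gmax (G `|` seq_graph e)).
  split; first exact: subsetUl.
  move=> /(_ (e 0%N, false, e 0%N)) GNG; apply: (eG 0%N); exists false, (e 0%N).
  by apply: GNG; right; exists 0%N, false.
apply: doublingU => //; first by apply: doubling_seq => // n; case: (eAG n).
by apply/seteqP; split=> // x [Gx /graph_dom_seq [n _ nx]]; apply: (eG n); rewrite nx.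
Qed.

Lemma card_setX_bool_le : infinite_set A -> A `*` [set: bool] #<= A.
Proof.
move=> Ainf; have [G [Gd Gmax]] := Zorn_bigcup doubling_bigcup.
have [GA Gim Gtot _ Ginj] := Gd; have AGfin := doubling_maximal_cofinite Gd Gmax.
have Ginf : infinite_set (graph_dom G).
  move=> Gfin; apply: Ainf.
  apply: (@sub_finite_set _ _ (graph_dom G `|` A `\` graph_dom G)).
    by move=> x Ax; have [Gx|nGx] := pselect (graph_dom G x); [left|right].
  by rewrite finite_setU.
(* The finitely many points of [A] missed by a maximal [G] are absorbed by [h]. *)
have [h [hinj hA]] := inj_into_infinite_subset Ginf (finite_set_countable AGfin).
pose f (p : T * bool) := xget p.1 [set y | G (h p.1, p.2, y)].
have Gf p : A p.1 -> G (h p.1, p.2, f p).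
  move=> Ap; apply: (@xgetPex _ p.1 [set y | G (h p.1, p.2, y)]).
  by apply: Gtot; apply: hA; exists p.1.
have finj : {in A `*` [set: bool] &, injective f}.
  move=> [x b] [x' b']; rewrite !inE => -[/= Ax _] [/= Ax' _] fE.
  have := Gf (x', b') Ax'; rewrite -fE => /(Ginj _ _ _ (Gf (x, b) Ax)) [hE ->].
  by rewrite (hinj _ _ _ _ hE) ?inE.
rewrite -(card_le_eql (inj_card_eq finj)); apply: subset_card_le.
by move=> _ [[x b] [/= Ax _] <-]; apply/GA/Gim/(Gf (x, b) Ax).
Qed.
End Doubling.

Lemma card_setU_le (T U : Type) (B : set U) (C1 C2 : set T) : infinite_set B ->
  C1 #<= B -> C2 #<= B -> C1 `|` C2 #<= B.
Proof.
elim/Ppointed: T => T in C1 C2 *; first by rewrite !emptyE.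
elim/Pchoice: U => U in B *.
move=> Binf /pcard_surjP [g1 g1s] /pcard_surjP [g2 g2s].
apply: card_le_trans (card_setX_bool_le Binf); apply/pcard_surjP.
exists (fun p => if p.2 then g1 p.1 else g2 p.1).
by move=> x [/g1s [y By <-]|/g2s [y By <-]]; [exists (y, true) | exists (y, false)].
Qed.

Lemma total_on_bigcup_seq (T : eqType) (FF : set (set T)) (s : seq T) :
  total_on FF subset -> (forall u, u \in s -> (\bigcup_(X in FF) X) u) ->
  s = [::] \/ exists2 X, FF X & forall u, u \in s -> X u.
Proof.
move=> FFtot; elim: s => [|v s IHs] sFF; first by left.
right; have [X FFX Xv] := sFF v (mem_head _ _).
have [->|[Y FFY sY]] := IHs (fun u us => sFF u (@mem_behead _ (v :: s) u us)).
  by exists X => // u; rewrite inE => /eqP ->.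
have [XY|YX] := FFtot _ _ FFX FFY.
  by exists Y => // u; rewrite inE => /orP [/eqP ->|/sY]; [apply: XY|].
by exists X => // u; rewrite inE => /orP [/eqP ->|/sY /YX].
Qed.

Section Span.
Variables (F : fieldType) (V : lmodType F).
Implicit Types (S B U : set V).

Lemma subspaceD U x y : subspace U -> U x -> U y -> U (x + y).
Proof. by move=> [_ [UD _]]; apply: UD. Qed.

Lemma subspaceZ U k x : subspace U -> U x -> U (k *: x).
Proof. by move=> [_ [_ UZ]]; apply: UZ. Qed.

Lemma subspaceB U x y : subspace U -> U x -> U y -> U (x - y).
Proof.
by move=> Usub Ux Uy; rewrite -scaleN1r; apply: subspaceD => //; apply: subspaceZ.
Qed.

Lemma subspace_comb U k l x y : subspace U -> U x -> U y -> U (k *: x + l *: y).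
Proof. by move=> Usub Ux Uy; apply: subspaceD => //; apply: subspaceZ. Qed.

Lemma subspace_sum U (I : eqType) (s : seq I) (f : I -> V) : subspace U ->
  (forall i, i \in s -> U (f i)) -> U (\sum_(i <- s) f i).
Proof.
move=> Usub; elim: s => [|i s IHs] sU; first by rewrite big_nil; case: Usub.
rewrite big_cons; apply: subspaceD => //; first exact/sU/mem_head.
by apply: IHs => j js; apply: sU; rewrite inE js orbT.
Qed.

Definition lspan S : set V := [set x | exists l : seq (F * V),
  (forall p, p \in l -> S p.2) /\ x = \sum_(p <- l) p.1 *: p.2].

Lemma lspan_sub S : S `<=` lspan S.
Proof.
move=> x Sx; exists [:: (1, x)]; rewrite big_seq1 scale1r; split=> // p.
by rewrite inE => /eqP ->.
Qed.

Lemma subspace_lspan S : subspace (lspan S).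
Proof.
split; first by exists [::]; rewrite big_nil.
split=> [_ _ [l1 [l1S ->]] [l2 [l2S ->]]|k _ [l [lS ->]]].
  exists (l1 ++ l2); rewrite big_cat; split=> // p.
  by rewrite mem_cat => /orP [/l1S|/l2S].
exists [seq (k * p.1, p.2) | p <- l]; split; first by move=> _ /mapP [p /lS Sp ->].
by rewrite big_map scaler_sumr; apply: eq_bigr => p _; rewrite scalerA.
Qed.

Lemma lspan_min S U : subspace U -> S `<=` U -> lspan S `<=` U.
Proof.
move=> Usub SU _ [l [lS ->]]; apply: subspace_sum => // p /lS Sp.
by apply: subspaceZ => //; apply: SU.
Qed.

Lemma lspan_mono S S' : S `<=` S' -> lspan S `<=` lspan S'.
Proof.
by move=> SS'; apply: lspan_min (subspace_lspan _) (subset_trans SS' _); apply: lspan_sub.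
Qed.

Lemma lspan_lincomb B (s : seq V) (c : V -> F) : (forall v, v \in s -> B v) ->
  lspan B (\sum_(v <- s) c v *: v).
Proof.
move=> sB; apply: subspace_sum => [|v /sB Bv]; first exact: subspace_lspan.
by apply: subspaceZ; [exact: subspace_lspan | exact: lspan_sub].
Qed.

Lemma spansP B U : spans B U <-> U `<=` lspan B.
Proof.
split=> [BU x /BU [s [c [sB ->]]]|UB x /UB [l [lB ->]]]; first exact: lspan_lincomb.
pose s := undup (map snd l); exists s, (fun v => \sum_(p <- l | p.2 == v) p.1).
split; first by move=> v; rewrite mem_undup => /mapP [p /lB ? ->].
have sumv p : p \in l -> p.1 *: p.2 = \sum_(v <- s | v == p.2) p.1 *: p.2.
  move=> pl; rewrite -big_filter filter_pred1_uniq ?undup_uniq ?big_seq1 //.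
  by rewrite mem_undup map_f.
rewrite (eq_big_seq _ sumv) (exchange_big_dep predT) //=.
by apply: eq_bigr => v _; rewrite scaler_suml; apply: eq_big => [p|p /eqP <-].
Qed.

Lemma lin_indepU1 B v : lin_indep B -> ~ lspan B v -> lin_indep (B `|` [set v]).
Proof.
move=> Bind Bv s c s_uniq sBv; have [vs|vNs] := boolP (v \in s); last first.
  move=> sum0; apply: Bind => // u us; case: (sBv u us) => // /= uv.
  by move: us; rewrite uv (negbTE vNs).
pose s' := [seq u <- s | u != v].
have s'B u : u \in s' -> B u.
  by rewrite mem_filter => /andP [uv /sBv [//|/= /eqP]]; rewrite (negbTE uv).
rewrite (bigD1_seq v) //= -big_filter => sum0.
have cv0 : c v = 0.
  apply: contrapT => /eqP cv_neq0; apply: Bv.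
  have -> : v = (c v)^-1 *: (c v *: v) by rewrite scalerA mulVf ?scale1r.
  move/eqP: sum0; rewrite addr_eq0 => /eqP ->; rewrite scalerN -scaleNr.
  by apply: subspaceZ; [exact: subspace_lspan | exact: lspan_lincomb].
move: sum0; rewrite cv0 scale0r add0r => /(Bind s' c (filter_uniq _ s_uniq) s'B) s'0 u us.
by case: (eqVneq u v) => [->//|uv]; apply: s'0; rewrite mem_filter uv.
Qed.

Lemma exists_basis_sub S : exists B, [/\ B `<=` S, lin_indep B & S `<=` lspan B].
Proof.
pose P B := B `<=` S /\ lin_indep B.
have [|B [[BS Bind] Bmax]] := @Zorn_bigcup _ P.
  move=> FF FFP FFtot; split; first by move=> x [X /FFP [XS _] /XS].
  move=> s c s_uniq sFF sum0 u us.
  have [s0|[X /FFP [_ Xind] sX]] := total_on_bigcup_seq FFtot sFF.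
    by move: us; rewrite s0.
  exact: Xind s c s_uniq sX sum0 u us.
exists B; split=> // v Sv; apply: contrapT => Bv; apply: (Bmax (B `|` [set v])).
  split; first exact: subsetUl.
  by move=> /(_ v (or_intror erefl)) /lspan_sub.
by split; [rewrite subUset; split => // _ ->|exact: lin_indepU1].
Qed.

Lemma basis_sub_span S U : S `<=` U -> U `<=` lspan S ->
  exists2 B, B `<=` S & is_basis U B.
Proof.
move=> SU US; have [B [BS Bind SB]] := exists_basis_sub S.
exists B => //; split; first exact: subset_trans BS SU.
split => //; apply/spansP; apply: subset_trans US _.
exact: lspan_min (subspace_lspan B) SB.
Qed.

Lemma finite_dim_lt U : infinite_dim [set: V] -> finite_dim U -> dim_lt U [set: V].
Proof.
move=> [BV [BVb BVinf]] [B [Bb Bfin]]; exists B, BV; do 2 split => //.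
by move=> /card_le_finite /(_ Bfin).
Qed.
End Span.

Lemma lspan_image (F : fieldType) (V V' : lmodType F) (f : {linear V -> V'}) (S : set V) :
  f @` lspan S `<=` lspan (f @` S).
Proof.
move=> _ [_ [l [lS ->]] <-]; exists [seq (p.1, f p.2) | p <- l]; split.
  by move=> _ /mapP [p /lS Sp ->]; exists p.2.
by rewrite linear_sum big_map; apply: eq_bigr => p _; rewrite linearZ.
Qed.

Lemma lspan_stable (F : fieldType) (V : lmodType F) (f : {linear V -> V}) (S : set V) :
  f @` S `<=` lspan S -> stable f (lspan S).
Proof. by move=> fS x /lspan_image /(lspan_min (subspace_lspan S) fS). Qed.

Lemma quadratic_sqr (F : fieldType) (V : lmodType F) (e : {linear V -> V}) :
  quadratic e -> exists k0 k1 : F, forall v, e (e v) = k1 *: e v + k0 *: v.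
Proof.
move=> [p [p_size p_e]]; have p2_neq0 : p`_2 != 0.
  by rewrite -[2%N]/(3.-1)%N -p_size -lead_coefE lead_coef_eq0 -size_poly_eq0 p_size.
exists (- (p`_0 / p`_2)), (- (p`_1 / p`_2)) => v; apply: (scalerI p2_neq0).
have := p_e v; rewrite /poly_end p_size !big_ord_recr big_ord0 /= add0r => /eqP.
rewrite addrC addr_eq0 => /eqP /= ->.
by rewrite scalerDr !scalerA !mulrN !(mulrCA p`_2) mulfV // !mulr1 !scaleNr opprD addrC.
Qed.

Section QuadraticSum.
Variables (F : fieldType) (V : lmodType F) (a b c w : {linear V -> V}) (lambda : F).
Hypotheses (qa : quadratic a) (qb : quadratic b) (qc : quadratic c).
Hypothesis abc : forall v, lambda *: v + w v = a v + b v + c v.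

Let cE v : c v = lambda *: v + w v - (a v + b v).
Proof. by rewrite abc addrC addKr. Qed.

Lemma subspace_ba_closed U x : subspace U ->
  (forall z, U (w z)) -> (forall z, U (a (w z))) -> (forall z, U (b (w z))) ->
  U x -> U (a x) -> U (b x) -> U (a (b x)) -> U (b (a x)).
Proof.
move=> Usub Uw Uaw Ubw Ux Uax Ubx Uabx.
have [a0 [a1 a2E]] := quadratic_sqr qa.
have [b0 [b1 b2E]] := quadratic_sqr qb.
have [c0 [c1 c2E]] := quadratic_sqr qc.
have UD u v : U u -> U v -> U (u + v) by apply: subspaceD.
have UB u v : U u -> U v -> U (u - v) by apply: subspaceB.
have UZ k u : U u -> U (k *: u) by apply: subspaceZ.
have Ucomb k l u v : U u -> U v -> U (k *: u + l *: v) by apply: subspace_comb.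
have Uaff u v : U u -> U v -> U (lambda *: u + v).
  by move=> Uu; apply: UD (UZ _ _ Uu).
pose y := c x.
have Uy : U y by rewrite /y cE; exact: UB _ _ (Uaff _ _ Ux (Uw x)) (UD _ _ Uax Ubx).
have Uay : U (a y).
  have -> : a y = lambda *: a x + a (w x) - (a (a x) + a (b x)).
    by rewrite /y cE linearB !linearD linearZ.
  rewrite a2E; apply: UB _ _ (Uaff _ _ Uax (Uaw x)) (UD _ _ _ Uabx).
  exact: Ucomb.
have Uby : U (b y).
  have -> : b y = lambda *: y + w y - c y - a y by rewrite abc addrK addrC addKr.
  have Ucy : U (c y) by rewrite /y c2E; exact: Ucomb.
  exact: UB _ _ (UB _ _ (Uaff _ _ Uy (Uw y)) Ucy) Uay.
have Eby : b y = lambda *: b x + b (w x) - (b (a x) + b (b x)).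
  by rewrite /y cE linearB !linearD linearZ.
have -> : b (a x) = lambda *: b x + b (w x) - b y - b (b x) by rewrite Eby subKr addrK.
rewrite b2E; apply: UB _ _ (UB _ _ (Uaff _ _ Ubx (Ubw x)) Uby) _.
exact: Ucomb.
Qed.

Variable W : set V.
Hypothesis wW : range w `<=` W.

Definition ab_gen (S : set V) : set V := S `|` a @` S `|` b @` S `|` (a \o b) @` S.
Definition ab_span : set V := lspan (ab_gen W).
Local Notation U := ab_span.

Lemma subspace_ab_span : subspace U.
Proof. exact: subspace_lspan. Qed.

Lemma ab_span_gen z : W z -> [/\ U z, U (a z), U (b z) & U (a (b z))].
Proof.
move=> Wz; split; apply: lspan_sub.
- by do 3 left.
- by do 2 left; right; exists z.
- by left; right; exists z.
- by right; exists z.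
Qed.

Lemma sub_ab_span : W `<=` U.
Proof. by move=> z /ab_span_gen []. Qed.

Lemma ab_span_ba x : U x -> U (a x) -> U (b x) -> U (a (b x)) -> U (b (a x)).
Proof.
have wU z : W (w z) by apply: wW; exists z.
apply: subspace_ba_closed; first exact: subspace_ab_span.
all: by move=> z; have [] := ab_span_gen (wU z).
Qed.

Lemma stable_ab_span_a : stable a U.
Proof.
have [a0 [a1 a2E]] := quadratic_sqr qa; have Usub := subspace_ab_span.
apply: lspan_stable => _ [x [[[Wx|[z Wz <-]]|[z Wz <-]]|[z Wz <-]] <-] /=.
- by have [] := ab_span_gen Wx.
- by have [Uz Uaz _ _] := ab_span_gen Wz; rewrite a2E; apply: subspace_comb.
- by have [] := ab_span_gen Wz.
- by have [_ _ Ubz Uabz] := ab_span_gen Wz; rewrite a2E; apply: subspace_comb.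
Qed.

Lemma stable_ab_span_b : stable b U.
Proof.
have [b0 [b1 b2E]] := quadratic_sqr qb; have Usub := subspace_ab_span.
apply: lspan_stable => _ [x [[[Wx|[z Wz <-]]|[z Wz <-]]|[z Wz <-]] <-] /=.
- by have [] := ab_span_gen Wx.
- by have [] := ab_span_gen Wz; apply: ab_span_ba.
- by have [Uz _ Ubz _] := ab_span_gen Wz; rewrite b2E; apply: subspace_comb.
- have [Uz Uaz Ubz Uabz] := ab_span_gen Wz.
  have Ubbz : U (b (b z)) by rewrite b2E; apply: subspace_comb.
  apply: ab_span_ba => //.
  by rewrite b2E linearD !linearZ; apply: subspace_comb.
Qed.

Lemma stable_ab_span_c : stable c U.
Proof.
move=> _ [x Ux <-]; rewrite cE.
have Usub := subspace_ab_span.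
have Uax : U (a x) by apply: stable_ab_span_a; exists x.
have Ubx : U (b x) by apply: stable_ab_span_b; exists x.
have Uwx : U (w x) by apply/sub_ab_span/wW; exists x.
by apply: subspaceB => //; apply: subspaceD => //; apply: subspaceZ.
Qed.

Lemma ab_span_basis BW : is_basis W BW ->
  exists2 BU, BU `<=` ab_gen BW & is_basis U BU.
Proof.
move=> [BW_W [_ /spansP W_BW]]; apply: basis_sub_span.
  apply: subset_trans _ (@lspan_sub _ _ (ab_gen W)).
  by rewrite /ab_gen; repeat apply: setUSS => //; apply: image_subset.
have gen_span (f : {linear V -> V}) :
    f @` BW `<=` ab_gen BW -> f @` W `<=` lspan (ab_gen BW).
  by move=> fBW _ [x /W_BW BWx <-]; apply: (lspan_mono fBW); apply: lspan_image; exists x.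
apply: lspan_min; first exact: subspace_lspan.
rewrite /ab_gen !subUset; split; [split; [split|]|].
- by apply: subset_trans W_BW _; apply: lspan_mono => x BWx; do 3 left.
- by apply: gen_span => y aBWy; do 2 left; right.
- by apply: gen_span => y bBWy; left; right.
- by apply: gen_span => y abBWy; right.
Qed.

Lemma ab_span_finite_dim : finite_dim W -> finite_dim U.
Proof.
move=> [BW [BWb BWfin]]; have [BU BU_gen BUb] := ab_span_basis BWb.
exists BU; split => //; apply: sub_finite_set BU_gen _.
by rewrite !finite_setU; do !split => //; apply: finite_image.
Qed.

Lemma ab_span_dim_lt : infinite_dim [set: V] -> dim_lt W [set: V] -> dim_lt U [set: V].
Proof.
move=> Vinf [BW [BV [BWb [BVb BV_BW]]]].
have [BWfin|BWinf] := pselect (finite_set BW).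
  by apply: finite_dim_lt Vinf _; apply: ab_span_finite_dim; exists BW.
have [BU BU_gen BUb] := ab_span_basis BWb.
exists BU, BV; do 2 split => //; move=> BV_BU; apply: BV_BW.
apply: card_le_trans BV_BU (card_le_trans (subset_card_le BU_gen) _).
rewrite /ab_gen; repeat apply: card_setU_le => //.
all: by [exact: card_lexx | exact: card_image_le].
Qed.
End QuadraticSum.

Theorem lemma1 (F : fieldType) (V : lmodType F)
  (a b c w : {linear V -> V}) (lambda : F) (W : set V) :
  infinite_dim [set: V] ->
  quadratic a -> quadratic b -> quadratic c ->
  (forall v, lambda *: v + w v = a v + b v + c v) ->
  dim_lt (range w) [set: V] ->
  subspace W -> range w `<=` W -> dim_lt W [set: V] ->
  (exists Wb : set V, subspace Wb /\ W `<=` Wb /\ dim_lt Wb [set: V] /\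
     stable a Wb /\ stable b Wb /\ stable c Wb) /\
  (finite_dim W ->
   exists Wb : set V, subspace Wb /\ W `<=` Wb /\ dim_lt Wb [set: V] /\
     stable a Wb /\ stable b Wb /\ stable c Wb /\ finite_dim Wb).
Proof.
move=> Vinf qa qb qc abc _ _ wW W_lt; pose U := ab_span a b W.
have [Usub WU Ua Ub Uc] :
    [/\ subspace U, W `<=` U, stable a U, stable b U & stable c U].
  split; [exact: subspace_ab_span | exact: sub_ab_span | exact: stable_ab_span_a
         | exact (stable_ab_span_b qa qb qc abc wW)
         | exact (stable_ab_span_c qa qb qc abc wW)].
split=> [|Wfin]; exists U.
  by do !split => //; exact: ab_span_dim_lt.
have Ufin := ab_span_finite_dim a b Wfin.
by do !split => //; exact: finite_dim_lt.
Qed.
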